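(* Let $(\mathcal V,\mathcal W,\lambda)$ be a FTvN system with $\mathcal V$ finite dimensional, and suppose the system is orbit-transitive. If $x\prec y$, then there exists a doubly stochastic transformation $D$, which is a convex combination of elements of $\operatorname{Aut}(\mathcal V,\mathcal W,\lambda)$, such that $x=Dy$.
   Context: A Fan-Theobald-von Neumann (FTvN) system is a triple $(\mathcal V,\mathcal W,\lambda)$ where $\mathcal V,\mathcal W$ are real inner product spaces and $\lambda:\mathcal V\to\mathcal W$ is a map such that: (A1) $\|\lambda(x)\|=\|x\|$ for all $x$; (A2) $\langle x,y\rangle\le\langle\lambda(x),\lambda(y)\rangle$ for all $x,y$; (A3) for every $c\in\mathcal V$ and $q\in\lambda(\mathcal V)$ there exists $x$ with $\lambda(x)=q$ and $\langle c,x\rangle=\langle\lambda(c),\lambda(x)\rangle$. $[u]=\{z:\lambda(z)=\lambda(u)\}$; $x\prec y$ iff $x\in\operatorname{conv}[y]$. A linear map $D$ is doubly stochastic if $Dx\prec x$ for all $x$. $\operatorname{Aut}(\mathcal V,\mathcal W,\lambda)$ is the set of invertible linear maps $A$ with $\lambda(Ax)=\lambda(x)$ for all $x$. The system is orbit-transitive if $\lambda(x)=\lambda(y)$ implies $y=Ax$ for some $A\in\operatorname{Aut}(\mathcal V,\mathcal W,\lambda)$. *)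

(* Real inner product spaces are modelled as lmodType R over an
   arbitrary R : realType, equipped with an explicit inner product. *)
From HB Require Import structures.
From mathcomp Require Import all_boot all_order all_algebra reals.
Set Implicit Arguments. Unset Strict Implicit. Unset Printing Implicit Defensive.
Import Order.TTheory GRing.Theory Num.Theory.
Local Open Scope ring_scope.

Section FTvN.
Variable R : realType.

Definition is_inner_product (V : lmodType R) (ip : V -> V -> R) : Prop :=
  [/\ (forall x y, ip x y = ip y x),
      (forall a x y z, ip (a *: x + y) z = a * ip x z + ip y z)
    & (forall x, x != 0 -> 0 < ip x x)].

Definition ipnorm (V : lmodType R) (ip : V -> V -> R) (x : V) : R :=
  Num.sqrt (ip x x).

Definition finite_dim (V : lmodType R) : Prop :=
  exists (n : nat) (b : 'I_n -> V),
    forall v : V, exists c : 'I_n -> R, v = \sum_(i < n) c i *: b i.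

Definition is_linear (V : lmodType R) (f : V -> V) : Prop :=
  forall (a : R) (x y : V), f (a *: x + y) = a *: f x + f y.

Definition FTvN_system (V W : lmodType R) (ipV : V -> V -> R) (ipW : W -> W -> R)
    (lam : V -> W) : Prop :=
  [/\ (forall x, ipnorm ipW (lam x) = ipnorm ipV x),
      (forall x y, ipV x y <= ipW (lam x) (lam y))
    & (forall (c : V) (q : W), (exists u, lam u = q) ->
         exists x, lam x = q /\ ipV c x = ipW (lam c) (lam x))].

Definition lam_class (V W : lmodType R) (lam : V -> W) (u : V) : V -> Prop :=
  fun z => lam z = lam u.

Definition in_conv (V : lmodType R) (S : V -> Prop) (x : V) : Prop :=
  exists (n : nat) (c : 'I_n -> R) (p : 'I_n -> V),
    [/\ (forall i, 0 <= c i), \sum_(i < n) c i = 1, (forall i, S (p i))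
      & x = \sum_(i < n) c i *: p i].

Definition majorized (V W : lmodType R) (lam : V -> W) (x y : V) : Prop :=
  in_conv (lam_class lam y) x.

Definition doubly_stochastic (V W : lmodType R) (lam : V -> W) (D : V -> V) : Prop :=
  is_linear D /\ forall x, majorized lam (D x) x.

Definition is_aut (V W : lmodType R) (lam : V -> W) (A : V -> V) : Prop :=
  [/\ is_linear A, bijective A & forall x, lam (A x) = lam x].

Definition orbit_transitive (V W : lmodType R) (lam : V -> W) : Prop :=
  forall x y, lam x = lam y -> exists A, is_aut lam A /\ y = A x.

Definition conv_comb_of_auts (V W : lmodType R) (lam : V -> W) (D : V -> V) : Prop :=
  exists (n : nat) (c : 'I_n -> R) (A : 'I_n -> V -> V),
    [/\ (forall i, 0 <= c i), \sum_(i < n) c i = 1, (forall i, is_aut lam (A i))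
      & forall v, D v = \sum_(i < n) c i *: A i v].

End FTvN.

From HB Require Import structures.
From mathcomp Require Import all_boot all_order all_algebra reals.
From mathcomp Require Import boolp.
Set Implicit Arguments. Unset Strict Implicit. Unset Printing Implicit Defensive.
Import Order.TTheory GRing.Theory Num.Theory.
Local Open Scope ring_scope.

(* By orbit transitivity every point of [y] is A y for some automorphism A, so a
   convex combination of points of [y] is the image of y under the same convex
   combination D of automorphisms.  Such a D is linear, and D v is a convex
   combination of the points A v of [v], i.e. D is doubly stochastic. *)

Section ConvexCombinationsOfAutomorphisms.
Variables (R : realType) (V W : lmodType R) (lam : V -> W).

Lemma is_linear_sum_scale n (c : 'I_n -> R) (A : 'I_n -> V -> V) :
  (forall i, is_linear (A i)) ->
  is_linear (fun v => \sum_(i < n) c i *: A i v).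
Proof.
move=> linA a u w; rewrite scaler_sumr -big_split /=.
by apply: eq_bigr => i _; rewrite linA scalerDr !scalerA mulrC.
Qed.

Lemma aut_lam_class A v : is_aut lam A -> lam_class lam v (A v).
Proof. by case=> _ _ lamA; rewrite /lam_class lamA. Qed.

Lemma conv_comb_of_auts_doubly_stochastic D :
  conv_comb_of_auts lam D -> doubly_stochastic lam D.
Proof.
case=> n [c [A [c_ge0 c_sum1 autA defD]]]; split.
- move=> a u w; rewrite !defD.
  by apply: is_linear_sum_scale => i; case: (autA i).
- move=> v; exists n, c, (fun i => A i v); split=> // i.
  exact: aut_lam_class.
Qed.

Lemma majorized_conv_comb_of_auts x y :
  orbit_transitive lam -> majorized lam x y ->
  exists D, conv_comb_of_auts lam D /\ x = D y.
Proof.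
move=> orbit [n [c [p [c_ge0 c_sum1 p_class ->]]]].
have [A autA] := choice (fun i => orbit y (p i) (esym (p_class i))).
exists (fun v => \sum_(i < n) c i *: A i v); split.
- by exists n, c, A; split=> // i; case: (autA i).
- by apply: eq_bigr => i _; case: (autA i) => _ ->.
Qed.

End ConvexCombinationsOfAutomorphisms.

Theorem corollary9p5 (R : realType) (V W : lmodType R)
    (ipV : V -> V -> R) (ipW : W -> W -> R) (lam : V -> W)
    (hipV : is_inner_product ipV) (hipW : is_inner_product ipW)
    (hsys : FTvN_system ipV ipW lam) (hfin : finite_dim V)
    (horb : orbit_transitive lam) (x y : V) (hxy : majorized lam x y) :
  exists D : V -> V,
    [/\ doubly_stochastic lam D, conv_comb_of_auts lam D & x = D y].
Proof.
have [D [convD ->]] := majorized_conv_comb_of_auts horb hxy.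
by exists D; split=> //; apply: conv_comb_of_auts_doubly_stochastic.
Qed.
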